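(* Let $L=\langle S,A,\to\rangle$ be a labelled transition system. For all $x,y\in\{o,b\}$ and $s,t\in S$, if $s\mathrel{\underline{\leftrightarrow}}_{(x,y)}t$ then $s\equiv_{E(x,y)}t$.
   Context: An LTS is $\langle S,A,\to\rangle$ with states $S$, actions $A$ containing the internal action $\tau$, and $\to\subseteq S\times A\times S$; write $s\xrightarrow{a}t$, and $\twoheadrightarrow$ for the reflexive-transitive closure of $\xrightarrow{\tau}$. For $R\subseteq S\times S$ and $s,s',t$: $s\twoheadrightarrow_{o,R,t}s'$ iff $s\twoheadrightarrow s'$; $s\twoheadrightarrow_{b,R,t}s'$ iff $s\twoheadrightarrow s'$, $t\,R\,s$ and $t\,R\,s'$. For $x,y\in\{o,b\}$, a symmetric $R$ is an $(x,y)$-generic bisimulation if whenever $s\,R\,t$ and $s\xrightarrow{a}s'$, either $a=\tau$ and $s'\,R\,t$, or there exist $t',t_1,t_2$ with $t\twoheadrightarrow_{x,R,s}t_1\xrightarrow{a}t_2\twoheadrightarrow_{y,R,s'}t'$ and $s'\,R\,t'$. $s\mathrel{\underline{\leftrightarrow}}_{(x,y)}t$ iff some $(x,y)$-generic bisimulation relates $s$ and $t$. Generic bisimulation game. Let $\frown,\smile$ be formal tags and $E\subseteq\{\frown,\smile\}$. Spoiler-owned configurations $\langle (s,t),c,m,r\rangle_S$ and Duplicator-owned $\langle (s,t),c,m,r\rangle_D$ have $(s,t)\in S\times S$, $c\in (A\times S)\cup\{\dagger\}$, $m\in (S\times\{\frown,\smile\})\cup\{\dagger\}$, $r\in\{*,\checkmark\}$.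 From $\langle (s,t),c,m,r\rangle_S$ Spoiler may: (S1) move to $\langle (s,t),c,m,*\rangle_D$ if $c\neq\dagger$; (S2a) for some $s\xrightarrow{a}s'$, move to $\langle (s,t),(a,s'),(t,\frown),*\rangle_D$ if $c=\dagger$; (S2b) for some $s\xrightarrow{a}s'$, move to $\langle (s,t),(a,s'),(t,\frown),\checkmark\rangle_D$ if $c\neq (a,s')$; (S3) for some $t\xrightarrow{a}t'$, move to $\langle (t,s),(a,t'),(s,\frown),\checkmark\rangle_D$. From $\langle (u,v),(a,u'),(\bar v,f),r\rangle_D$ Duplicator may: (D1) move to $\langle (u',\bar v),\dagger,\dagger,\checkmark\rangle_S$ if $a=\tau$; (D2) if $f=\frown$ and $\bar v\xrightarrow{a}v'$: (a) move to $\langle (u',v'),(a,u'),(v',\smile),*\rangle_S$, or (b) move to $\langle (u',v'),\dagger,\dagger,\checkmark\rangle_S$, or (c) only if $\smile\in E$, move to $\langle (u,v),(a,u'),(v',\smile),*\rangle_S$; (D3) for some $\bar v\xrightarrow{\tau}v'$: (a) move to $\langle (u,v'),(a,u'),(v',f),*\rangle_S$, or (b) only if $f=\smile$, move to $\langle (u',v'),\dagger,\dagger,\checkmark\rangle_S$, or (c) only if $f\in E$, move to $\langle (u,v),(a,u'),(v',f),*\rangle_S$. Duplicator wins a finite play if Spoiler gets stuck, and an infinite play if it has infinitely many $\checkmark$ rewards; other plays are won by Spoiler. $s\equiv_E t$ iff Duplicator has a strategy winning all plays from $\langle (s,t),\dagger,\dagger,*\rangle_S$. $E(x,y)$ is the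 smallest set with $\frown\in E(o,y)$ and $\smile\in E(x,o)$ for all $x,y\in\{o,b\}$. *)

From Stdlib Require Import List Relations.
Set Implicit Arguments.

Section Defs.
Variables (S A : Type) (tau : A) (step : S -> A -> S -> Prop).

Definition tstep (s s' : S) : Prop := step s tau s'.
Definition taustar : S -> S -> Prop := clos_refl_trans S tstep.

Inductive ob : Type := o | b.

Definition genreach (x : ob) (R : S -> S -> Prop) (t s s' : S) : Prop :=
  match x with
  | o => taustar s s'
  | b => taustar s s' /\ R t s /\ R t s'
  end.

Definition symmetric_rel (R : S -> S -> Prop) : Prop :=
  forall s t, R s t -> R t s.

Definition generic_bisim (x y : ob) (R : S -> S -> Prop) : Prop :=
  symmetric_rel R /\
  forall s t s' a, R s t -> step s a s' ->
    (a = tau /\ R s' t) \/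
    (exists t' t1 t2,
        genreach x R s t t1 /\ step t1 a t2 /\ genreach y R s' t2 t' /\ R s' t').

Definition gen_bisimilar (x y : ob) (s t : S) : Prop :=
  exists R, generic_bisim x y R /\ R s t.

Inductive tag : Type := Frown | Smile.
Inductive owner : Type := Spoiler | Duplicator.

(** configuration <(s,t), c, m, r>_owner; [None] encodes dagger,
    [rw = false] encodes *, [rw = true] encodes the checkmark. *)
Record conf : Type := mkConf {
  own : owner;
  pos : S * S;
  cc  : option (A * S);
  mm  : option (S * tag);
  rw  : bool
}.

Definition Eset (x y : ob) (f : tag) : Prop :=
  match f with
  | Frown => x = o
  | Smile => y = o
  end.

Inductive move (E : tag -> Prop) : conf -> conf -> Prop :=
| mS1 s t c m r :
    c <> None ->
    move E (mkConf Spoiler (s, t) c m r) (mkConf Duplicator (s, t) c m false)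
| mS2a s t c m r a s' :
    step s a s' -> c = None ->
    move E (mkConf Spoiler (s, t) c m r)
           (mkConf Duplicator (s, t) (Some (a, s')) (Some (t, Frown)) false)
| mS2b s t c m r a s' :
    step s a s' -> c <> Some (a, s') ->
    move E (mkConf Spoiler (s, t) c m r)
           (mkConf Duplicator (s, t) (Some (a, s')) (Some (t, Frown)) true)
| mS3 s t c m r a t' :
    step t a t' ->
    move E (mkConf Spoiler (s, t) c m r)
           (mkConf Duplicator (t, s) (Some (a, t')) (Some (s, Frown)) true)
| mD1 u v a u' vb f r :
    a = tau ->
    move E (mkConf Duplicator (u, v) (Some (a, u')) (Some (vb, f)) r)
           (mkConf Spoiler (u', vb) None None true)
| mD2a u v a u' vb f r v' :
    f = Frown -> step vb a v' ->
    move E (mkConf Duplicator (u, v) (Some (a, u')) (Some (vb, f)) r)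
           (mkConf Spoiler (u', v') (Some (a, u')) (Some (v', Smile)) false)
| mD2b u v a u' vb f r v' :
    f = Frown -> step vb a v' ->
    move E (mkConf Duplicator (u, v) (Some (a, u')) (Some (vb, f)) r)
           (mkConf Spoiler (u', v') None None true)
| mD2c u v a u' vb f r v' :
    f = Frown -> step vb a v' -> E Smile ->
    move E (mkConf Duplicator (u, v) (Some (a, u')) (Some (vb, f)) r)
           (mkConf Spoiler (u, v) (Some (a, u')) (Some (v', Smile)) false)
| mD3a u v a u' vb f r v' :
    step vb tau v' ->
    move E (mkConf Duplicator (u, v) (Some (a, u')) (Some (vb, f)) r)
           (mkConf Spoiler (u, v') (Some (a, u')) (Some (v', f)) false)
| mD3b u v a u' vb f r v' :
    step vb tau v' -> f = Smile ->
    move E (mkConf Duplicator (u, v) (Some (a, u')) (Some (vb, f)) r)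
           (mkConf Spoiler (u', v') None None true)
| mD3c u v a u' vb f r v' :
    step vb tau v' -> E f ->
    move E (mkConf Duplicator (u, v) (Some (a, u')) (Some (vb, f)) r)
           (mkConf Spoiler (u, v) (Some (a, u')) (Some (v', f)) false).

(** A (history-dependent) Duplicator strategy maps the history of the play
    (the list of configurations visited so far, in order, ending with the
    current one) to the next configuration. *)
Definition strategy : Type := list conf -> conf.

Definition history (p : nat -> conf) (n : nat) : list conf :=
  map p (seq 0 (Datatypes.S n)).

Definition consistent_step (E : tag -> Prop) (sigma : strategy)
    (p : nat -> conf) (i : nat) : Prop :=
  match own (p i) with
  | Spoiler => move E (p i) (p (Datatypes.S i))
  | Duplicator => p (Datatypes.S i) = sigma (history p i)
  end.

(** sigma is winning from c0:
    (1) along every consistent finite play prefix ending in a Duplicator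
        configuration, sigma prescribes a legal move (so Duplicator is never
        stuck; finite maximal plays therefore end with Spoiler stuck, which
        Duplicator wins);
    (2) every consistent infinite play has infinitely many checkmarks. *)
Definition winning_strategy (E : tag -> Prop) (c0 : conf) (sigma : strategy)
  : Prop :=
  (forall (p : nat -> conf) (n : nat),
      p 0 = c0 ->
      (forall i, i < n -> consistent_step E sigma p i) ->
      own (p n) = Duplicator ->
      move E (p n) (sigma (history p n))) /\
  (forall p : nat -> conf,
      p 0 = c0 ->
      (forall i, consistent_step E sigma p i) ->
      forall n, exists m, n <= m /\ rw (p m) = true).

Definition game_equiv (E : tag -> Prop) (s t : S) : Prop :=
  exists sigma : strategy,
    winning_strategy E (mkConf Spoiler (s, t) None None false) sigma.

End Defs.

(** Duplicator keeps every Spoiler position (u, v) _linked_: u is B-related to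
    a tau-descendant of v and v to a tau-descendant of u, where B is the
    generic bisimulation.  A challenge u -a-> u' is answered by the transfer
    property of B with a path v ->> v1 ->> t1 -a-> t2 ->> t' where B u v1 and
    B u' t'.  Duplicator walks from v to t1 by tau-steps, moving only her
    marker (D3c, allowed since frown is in E(o,y)) when x = o, and moving her
    position (D3a) when x = b, in which case B u t1 keeps the intermediate
    positions linked; she then answers with a, and when y = o walks the
    smiling marker on to t' (D2c, D3c) before closing the round (D3b).  Each
    answer is thus a finite sequence of unrewarded rounds ending in a
    checkmark, so replying at every Duplicator configuration with a move that
    decreases the least number of remaining rounds wins every play. *)

From Stdlib Require Import List Relations Classical ClassicalEpsilon Arith Lia.
Set Implicit Arguments.

Section LTS.
Variables (St A : Type) (tau : A) (step : St -> A -> St -> Prop).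

Local Notation conf := (conf St A).
Local Notation "p ->> q" := (taustar tau step p q) (at level 70).

Lemma genreach_taustar z R (t p q : St) : genreach tau step z R t p q -> p ->> q.
Proof. destruct z; simpl; tauto. Qed.

Lemma last_history (p : nat -> conf) n c : last (history p n) c = p n.
Proof. unfold history. rewrite seq_S, map_app. apply last_last. Qed.

Definition opponent (o : owner) : owner :=
  match o with Spoiler => Duplicator | Duplicator => Spoiler end.

Definition passed (c : conf) : conf := mkConf Duplicator (pos c) (cc c) (mm c) false.

Section Game.
Variable E : tag -> Prop.

Local Notation "c ~> c'" := (move tau step E c c') (at level 70).

Lemma move_own c c' : c ~> c' -> own c' = opponent (own c).
Proof. intros Hm; destruct Hm; reflexivity. Qed.

Lemma move_to_spoiler_rw c c' :
  c ~> c' -> own c' = Spoiler -> (rw c' = true <-> cc c' = None).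
Proof. intros Hm Ho; destruct Hm; simpl in *; try discriminate; split; congruence. Qed.

Lemma spoiler_unrewarded_move c c' :
  own c = Spoiler -> cc c <> None -> c ~> c' -> rw c' = false -> c' = passed c.
Proof.
  intros Ho Hc Hm Hr. destruct c as [oc [s t] cx m r]; simpl in *; subst oc.
  inversion Hm; subst; simpl in *; try reflexivity; congruence.
Qed.

Section RankedStrategy.
Variables (inv : conf -> Prop) (reply : conf -> conf) (rank : conf -> nat) (c0 : conf).
Hypothesis inv_c0 : inv c0.
Hypothesis inv_spoiler : forall c c', own c = Spoiler -> inv c -> c ~> c' -> inv c'.
Hypothesis reply_move :
  forall d, own d = Duplicator -> inv d -> d ~> reply d /\ inv (reply d).
Hypothesis rank_decreases : forall d d',
  own d = Duplicator -> inv d -> rw (reply d) = false -> reply d ~> d' ->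
  rw d' = false -> rank d' < rank d.

Local Notation sigma := (fun h => reply (last h c0)).

Lemma inv_play p n :
  p 0 = c0 -> (forall i, i < n -> consistent_step tau step E sigma p i) -> inv (p n).
Proof.
  intros Hp0 Hc. induction n as [|n IH].
  - rewrite Hp0; exact inv_c0.
  - assert (Hn : inv (p n)) by (apply IH; intros i Hi; apply Hc; lia).
    specialize (Hc n (Nat.lt_succ_diag_r n)). unfold consistent_step in Hc.
    destruct (own (p n)) eqn:Ho.
    + exact (inv_spoiler Ho Hn Hc).
    + rewrite Hc, last_history. apply reply_move; assumption.
Qed.

Lemma ranked_strategy_winning : winning_strategy tau step E c0 sigma.
Proof.
  split.
  - intros p n Hp0 Hc Ho. rewrite last_history.
    apply reply_move; [exact Ho | exact (inv_play p Hp0 Hc)].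
  - intros p Hp0 Hc n.
    assert (Hinv : forall i, inv (p i)) by (intro i; apply inv_play; auto).
    assert (Hmove : forall i, p i ~> p (S i) /\
              (own (p i) = Duplicator -> p (S i) = reply (p i))).
    { intro i. specialize (Hc i). unfold consistent_step in Hc.
      destruct (own (p i)) eqn:Ho.
      - split; [exact Hc | discriminate].
      - rewrite last_history in Hc. rewrite Hc.
        split; [apply reply_move; auto | reflexivity]. }
    assert (Hown : forall i, own (p (S i)) = opponent (own (p i)))
      by (intro i; apply move_own, Hmove).
    apply NNPP; intros Hno.
    assert (Hfalse : forall m, n <= m -> rw (p m) = false).
    { intros m Hm. destruct (rw (p m)) eqn:Er; auto. exfalso; eauto. }
    assert (Hdescent : forall r i, rank (p i) = r -> n <= i ->
              own (p i) = Duplicator -> False).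
    { intro r. induction r as [r IH] using lt_wf_ind. intros i Hr Hi Ho.
      destruct (Hmove i) as [_ Hreply]. specialize (Hreply Ho).
      apply (IH (rank (p (S (S i)))) ) with (i := S (S i)); [| reflexivity | lia |].
      - subst r. destruct (Hmove (S i)) as [Hm _]. rewrite Hreply in Hm.
        apply rank_decreases; [exact Ho | exact (Hinv i) | | exact Hm | apply Hfalse; lia].
        rewrite <- Hreply; apply Hfalse; lia.
      - rewrite !Hown, Ho; reflexivity. }
    destruct (own (p n)) eqn:Ho.
    + apply (Hdescent _ (S n) eq_refl); [lia | rewrite Hown, Ho; reflexivity].
    + exact (Hdescent _ n eq_refl (le_n n) Ho).
Qed.

End RankedStrategy.

Section Forcing.
Variable K : St -> St -> Prop.

Definition related_at (c : conf) : Prop := K (fst (pos c)) (snd (pos c)).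

(** [n + 1] bounds Duplicator's moves until the checkmark.  At the unrewarded
    Spoiler configurations in between, Spoiler can only pass (S1) or open a
    fresh challenge, which is itself rewarded. *)
Inductive forces_check : nat -> conf -> Prop :=
| forces_now n d d' :
    d ~> d' -> rw d' = true -> related_at d' -> forces_check n d
| forces_later n d d' :
    d ~> d' -> rw d' = false -> related_at d' -> forces_check n (passed d') ->
    forces_check (S n) d.

Definition forceable (d : conf) : Prop := exists n, forces_check n d.

Definition answerable (u v : St) (a : A) (u' w : St) (f : tag) : Prop :=
  forall r, forceable (mkConf Duplicator (u, v) (Some (a, u')) (Some (w, f)) r).

Lemma answerable_tau u v u' w f : K u' w -> answerable u v tau u' w f.
Proof.
  intros HK r. exists 0.
  eapply forces_now with (d' := mkConf Spoiler (u', w) None None true);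
    [apply mD1 | ..]; auto.
Qed.

Lemma answerable_frown u v a u' w w' :
  step w a w' -> K u' w' -> answerable u v a u' w Frown.
Proof.
  intros Hs HK r. exists 0.
  eapply forces_now with (d' := mkConf Spoiler (u', w') None None true);
    [apply mD2b | ..]; auto.
Qed.

Lemma answerable_smile u v a u' w w' :
  step w tau w' -> K u' w' -> answerable u v a u' w Smile.
Proof.
  intros Hs HK r. exists 0.
  eapply forces_now with (d' := mkConf Spoiler (u', w') None None true);
    [apply mD3b | ..]; auto.
Qed.

Lemma answerable_frown_smile u v a u' w w' :
  E Smile -> K u v -> step w a w' -> answerable u v a u' w' Smile ->
  answerable u v a u' w Frown.
Proof.
  intros HE HK Hs Hw' r. destruct (Hw' false) as [n Hn]. exists (S n).
  eapply forces_later with (d' := mkConf Spoiler (u, v) (Some (a, u')) (Some (w', Smile)) false);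
    [apply mD2c | ..]; auto.
Qed.

Lemma answerable_marker_walk u v a u' w w' f :
  E f -> K u v -> w ->> w' -> answerable u v a u' w' f -> answerable u v a u' w f.
Proof.
  intros HE HK Hw Hw'. revert w Hw.
  apply (clos_refl_trans_ind_right _ _ (fun w => answerable u v a u' w f)); [exact Hw' |].
  intros w w1 Hs IH _ r. destruct (IH false) as [n Hn]. exists (S n).
  eapply forces_later with (d' := mkConf Spoiler (u, v) (Some (a, u')) (Some (w1, f)) false);
    [apply mD3c | ..]; auto.
Qed.

Lemma answerable_position_walk u a u' w w' f :
  w ->> w' -> (forall z, w ->> z -> z ->> w' -> K u z) ->
  answerable u w' a u' w' f -> answerable u w a u' w f.
Proof.
  intros Hw Hpath Hw'. revert w Hw Hpath.
  apply (clos_refl_trans_ind_right _ _ (fun w =>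
           (forall z, w ->> z -> z ->> w' -> K u z) -> answerable u w a u' w f));
    [intros _; exact Hw' |].
  intros w w1 Hs IH Hw1 Hpath.
  assert (Hstep : w ->> w1) by (apply rt_step; exact Hs).
  intros r. destruct (IH (fun z H1 H2 => Hpath z (rt_trans _ _ _ _ _ Hstep H1) H2) false)
    as [n Hn].
  exists (S n).
  eapply forces_later with (d' := mkConf Spoiler (u, w1) (Some (a, u')) (Some (w1, f)) false);
    [apply mD3a | ..]; auto.
  apply Hpath; [exact Hstep | exact Hw1].
Qed.

Definition check_rank (d : conf) : nat :=
  epsilon (inhabits 0) (fun n => forces_check n d /\ forall k, forces_check k d -> n <= k).

Lemma check_rank_spec d :
  forceable d ->
  forces_check (check_rank d) d /\ forall k, forces_check k d -> check_rank d <= k.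
Proof.
  intros Hd. unfold check_rank. apply epsilon_spec.
  destruct (dec_inh_nat_subset_has_unique_least_element _ (fun n => classic _) Hd)
    as [n [Hn _]].
  exists n; exact Hn.
Qed.

Definition good_reply (d d' : conf) : Prop :=
  d ~> d' /\ related_at d' /\
  (rw d' = true \/ forceable (passed d') /\ check_rank (passed d') < check_rank d).

Definition reply (d : conf) : conf := epsilon (inhabits d) (good_reply d).

Lemma reply_good d : forceable d -> good_reply d (reply d).
Proof.
  intros Hd. unfold reply. apply epsilon_spec.
  destruct (check_rank_spec Hd) as [Hrank _].
  remember (check_rank d) as m eqn:Hm.
  destruct Hrank as [n d0 d' Hmove Hrw HK | n d0 d' Hmove Hrw HK Hn];
    exists d'; repeat split; auto.
  right. split; [exists n; exact Hn |].
  apply Nat.le_lt_trans with n; [apply (check_rank_spec (ex_intro _ n Hn)), Hn | lia].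
Qed.

Definition play_inv (c : conf) : Prop :=
  match own c with
  | Spoiler => related_at c /\ (cc c = None \/ forceable (passed c))
  | Duplicator => forceable c
  end.

Lemma play_inv_reply d :
  own d = Duplicator -> play_inv d -> d ~> reply d /\ play_inv (reply d).
Proof.
  intros Ho Hd. unfold play_inv in Hd. rewrite Ho in Hd.
  destruct (reply_good Hd) as [Hm [HK Hrw]].
  assert (Ho' : own (reply d) = Spoiler) by (rewrite (move_own Hm), Ho; reflexivity).
  split; [exact Hm |]. unfold play_inv. rewrite Ho'. split; [exact HK |].
  destruct Hrw as [Hrw | [Hf _]]; [left | right; exact Hf].
  apply (move_to_spoiler_rw Hm Ho'); exact Hrw.
Qed.

Lemma check_rank_reply d d' :
  own d = Duplicator -> play_inv d -> rw (reply d) = false -> reply d ~> d' ->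
  rw d' = false -> check_rank d' < check_rank d.
Proof.
  intros Ho Hd Hrw Hm' Hrw'. unfold play_inv in Hd. rewrite Ho in Hd.
  destruct (reply_good Hd) as [Hm [_ Hrank]].
  assert (Ho' : own (reply d) = Spoiler) by (rewrite (move_own Hm), Ho; reflexivity).
  assert (Hcc : cc (reply d) <> None).
  { intros Hcc. apply (move_to_spoiler_rw Hm Ho') in Hcc. congruence. }
  rewrite (spoiler_unrewarded_move Ho' Hcc Hm' Hrw').
  destruct Hrank as [Hr | [_ Hlt]]; [congruence | exact Hlt].
Qed.

Section Answerable.
Hypothesis K_sym : forall u v, K u v -> K v u.
Hypothesis answers_challenges :
  forall u v a u', K u v -> step u a u' -> answerable u v a u' v Frown.

Lemma play_inv_spoiler c c' : own c = Spoiler -> play_inv c -> c ~> c' -> play_inv c'.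
Proof.
  intros Ho Hc Hm. destruct c as [oc [s t] cx m r]; simpl in Ho; subst oc.
  destruct Hc as [HK Hcx]; simpl in HK, Hcx.
  inversion Hm; subst; unfold play_inv; simpl.
  - destruct Hcx as [Hcx | Hf]; [congruence | exact Hf].
  - apply answers_challenges; assumption.
  - apply answers_challenges; assumption.
  - apply answers_challenges; [apply K_sym |]; assumption.
Qed.

Lemma game_equiv_of_answerable s t : K s t -> game_equiv tau step E s t.
Proof.
  intros Hst. eexists.
  apply ranked_strategy_winning with (inv := play_inv) (rank := check_rank).
  - unfold play_inv; simpl; auto.
  - exact play_inv_spoiler.
  - exact play_inv_reply.
  - exact check_rank_reply.
Qed.

End Answerable.
End Forcing.
End Game.

Definition linked (B : St -> St -> Prop) (u v : St) : Prop :=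
  (exists v1, v ->> v1 /\ B u v1) /\ (exists u1, u ->> u1 /\ B u1 v).

Lemma linked_of_rel B u v : B u v -> linked B u v.
Proof. intros H; split; [exists v | exists u]; split; auto; apply rt_refl. Qed.

Lemma linked_sym B u v : symmetric_rel B -> linked B u v -> linked B v u.
Proof.
  intros Hsym [[v1 [Hv Buv1]] [u1 [Hu Bu1v]]].
  split; [exists u1 | exists v1]; auto.
Qed.

Section GenericBisimulation.
Variables (x y : ob) (B : St -> St -> Prop).
Hypothesis HB : generic_bisim tau step x y B.

Local Notation answerable := (answerable (Eset x y) (linked B)).

Lemma generic_bisim_taustar p q p' : B p q -> p ->> p' -> exists q', q ->> q' /\ B p' q'.
Proof.
  intros Hpq Hp. revert q Hpq.
  induction Hp as [p p' Hs | p | p1 p2 p3 _ IH12 _ IH23]; intros q Hpq.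
  - destruct HB as [_ Htransfer].
    destruct (Htransfer _ _ _ _ Hpq Hs) as [[_ Hq] | [q' [q1 [q2 [H1 [H2 [H3 Hq']]]]]]].
    + exists q; split; [apply rt_refl | exact Hq].
    + exists q'; split; [| exact Hq'].
      apply rt_trans with q1; [eapply genreach_taustar; eauto |].
      apply rt_trans with q2; [apply rt_step; exact H2 | eapply genreach_taustar; eauto].
  - exists q; split; [apply rt_refl | exact Hpq].
  - destruct (IH12 q Hpq) as [q1 [Hq1 B1]].
    destruct (IH23 q1 B1) as [q2 [Hq2 B2]].
    exists q2; split; [apply rt_trans with q1 |]; assumption.
Qed.

Lemma linked_between u v w z : linked B u v -> B u w -> v ->> z -> z ->> w -> linked B u z.
Proof.
  intros [_ [u1 [Hu Bu1v]]] Buw Hvz Hzw. split; [exists w; auto |].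
  destruct HB as [Hsym _].
  destruct (generic_bisim_taustar (Hsym _ _ Bu1v) Hvz) as [u2 [Hu2 Bzu2]].
  exists u2; split; [apply rt_trans with u1 | apply Hsym]; assumption.
Qed.

Lemma answerable_after u v a u' t1 t2 t' :
  linked B u v -> step t1 a t2 -> genreach tau step y B u' t2 t' -> B u' t' ->
  answerable u v a u' t1 Frown.
Proof.
  intros HK Hs Ht2 Bt'. destruct y; simpl in Ht2.
  - apply clos_rt_rtn1 in Ht2. destruct Ht2 as [| t'' t' Hlast Ht''].
    + apply answerable_frown with t2; [exact Hs | apply linked_of_rel, Bt'].
    + apply answerable_frown_smile with t2; [reflexivity | exact HK | exact Hs |].
      apply answerable_marker_walk with t''; [reflexivity | exact HK | |].
      * apply clos_rtn1_rt; exact Ht''.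
      * apply answerable_smile with t'; [exact Hlast | apply linked_of_rel, Bt'].
  - destruct Ht2 as [_ [Bt2 _]].
    apply answerable_frown with t2; [exact Hs | apply linked_of_rel, Bt2].
Qed.

Lemma answerable_before u v a u' w :
  linked B u v -> v ->> w -> (x = b -> B u w) ->
  (forall v0, linked B u v0 -> answerable u v0 a u' w Frown) ->
  answerable u v a u' v Frown.
Proof.
  intros HK Hvw HBw Hw.
  assert (Hx : x = o \/ x = b) by (destruct x; auto).
  destruct Hx as [Hx | Hx].
  - apply answerable_marker_walk with w; [exact Hx | exact HK | exact Hvw | exact (Hw v HK)].
  - apply answerable_position_walk with w; [exact Hvw | |].
    + intros z Hvz Hzw. exact (linked_between HK (HBw Hx) Hvz Hzw).
    + apply Hw, linked_of_rel, HBw, Hx.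
Qed.

Lemma challenge_answerable u v a u' :
  linked B u v -> step u a u' -> answerable u v a u' v Frown.
Proof.
  intros HK Hs. pose proof HK as [[v1 [Hvv1 Buv1]] _].
  pose proof HB as [_ Htransfer].
  destruct (Htransfer _ _ _ _ Buv1 Hs)
    as [[-> Bu'v1] | [t' [t1 [t2 [Ht1 [Ht12 [Ht2 Bt']]]]]]].
  - apply answerable_before with v1; [exact HK | exact Hvv1 | auto |].
    intros v0 _. apply answerable_tau, linked_of_rel, Bu'v1.
  - apply answerable_before with t1; [exact HK | | |].
    + apply rt_trans with v1; [exact Hvv1 | eapply genreach_taustar; eauto].
    + intros Hx; rewrite Hx in Ht1; apply Ht1.
    + intros v0 Hv0. eapply answerable_after; eauto.
Qed.

End GenericBisimulation.
End LTS.

Theorem lemma5p5 (S A : Type) (tau : A) (step : S -> A -> S -> Prop)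
  (x y : ob) (s t : S) :
  gen_bisimilar tau step x y s t ->
  game_equiv tau step (Eset x y) s t.
Proof.
  intros [B [HB Bst]].
  apply game_equiv_of_answerable with (K := linked tau step B).
  - intros u v; apply linked_sym, HB.
  - intros u v a u'; apply (challenge_answerable HB).
  - apply linked_of_rel, Bst.
Qed.
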